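(* Let $\alpha=\omega^{\delta_n}s_n+\dots+\omega^{\delta_1}s_1+m$ be an infinite ordinal written in Cantor normal form, where $n,s_1,\dots,s_n\in\mathbb N=\{1,2,\dots\}$, $0<\delta_1<\dots<\delta_n$ and $m\in\omega$. Then $\mathbb P(\alpha)\cong\prod_{i=1}^n(\mathbb P(\omega^{\delta_i}))^{s_i}$, $\mathrm{sm}\,\mathbb P(\alpha)\cong\prod_{i=1}^n(\mathrm{sm}\,\mathbb P(\omega^{\delta_i}))^{s_i}$ and $\mathrm{sq}\,\mathbb P(\alpha)\cong\prod_{i=1}^n(\mathrm{sq}\,\mathbb P(\omega^{\delta_i}))^{s_i}$.
   Context: For an ordinal $X$, $\mathbb P(X)=\{f[X]: f:X\to X \text{ strictly increasing}\}$, ordered by $\subset$ (the poset of copies of $X$). Products of (pre)orders are ordered coordinatewise. For a preorder $\mathbb P=\langle P,\le\rangle$: $p\perp q$ means no $r$ satisfies $r\le p,q$; the separative modification is $\mathrm{sm}(\mathbb P)=\langle P,\le^*\rangle$ with $p\le^* q$ iff $\forall r\le p\,\exists s\le r\ (s\le q)$; the separative quotient $\mathrm{sq}(\mathbb P)$ is the antisymmetric quotient of $\mathrm{sm}(\mathbb P)$ (identify $p,q$ when $p\le^*q\le^*p$). *)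

(* Ordinals are represented by well-ordered types. *)
From Stdlib Require Import List Arith.

Record woset := WoSet { wcar : Type; wlt : wcar -> wcar -> Prop }.

Definition strict_total {T : Type} (R : T -> T -> Prop) : Prop :=
  (forall x, ~ R x x) /\ (forall x y z, R x y -> R y z -> R x z) /\
  (forall x y, R x y \/ x = y \/ R y x).

Definition well_order {T : Type} (R : T -> T -> Prop) : Prop :=
  strict_total R /\ well_founded R.

Definition wseg (W : woset) (d : wcar W) : woset :=
  WoSet {x : wcar W | wlt W x d} (fun x y => wlt W (proj1_sig x) (proj1_sig y)).

(* omega^W : finitely supported functions W -> nat, compared at the
   largest point where they differ (standard model of ordinal exponentiation) *)
Definition womega_pow (W : woset) : woset :=
  WoSet {f : wcar W -> nat | exists l : list (wcar W), forall x, f x <> 0 -> In x l}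
        (fun f g => exists x, proj1_sig f x < proj1_sig g x /\
                    forall y, wlt W x y -> proj1_sig f y = proj1_sig g y).

Definition wsum (A B : woset) : woset :=
  WoSet (wcar A + wcar B)%type
        (fun u v => match u, v with
                    | inl a, inl a' => wlt A a a'
                    | inl _, inr _ => True
                    | inr _, inl _ => False
                    | inr b, inr b' => wlt B b b'
                    end).

(* ordinal product A * s (s a natural number): s consecutive copies of A *)
Definition wmuln (A : woset) (s : nat) : woset :=
  WoSet ({j : nat | j < s} * wcar A)%type
        (fun u v => proj1_sig (fst u) < proj1_sig (fst v) \/
                    (proj1_sig (fst u) = proj1_sig (fst v) /\ wlt A (snd u) (snd v))).

Definition wfin (m : nat) : woset :=
  WoSet {j : nat | j < m} (fun u v => proj1_sig u < proj1_sig v).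

(* Cantor normal form  omega^(seg d_(k-1)) * s_(k-1) + ... + omega^(seg d_0) * s_0 + m *)
Fixpoint cnf (D : woset) (d : nat -> wcar D) (s : nat -> nat) (k m : nat) : woset :=
  match k with
  | 0 => wfin m
  | S k' => wsum (wmuln (womega_pow (wseg D (d k'))) (s k')) (cnf D d s k' m)
  end.

Record preord := PreOrd { pcar : Type; ple : pcar -> pcar -> Prop }.

Definition strictly_increasing {W : woset} (f : wcar W -> wcar W) : Prop :=
  forall x y, wlt W x y -> wlt W (f x) (f y).

Definition copiesPO (W : woset) : preord :=
  PreOrd {S : wcar W -> Prop | exists f : wcar W -> wcar W,
                 strictly_increasing f /\ forall y, S y <-> exists x, y = f x}
         (fun S1 S2 => forall y, proj1_sig S1 y -> proj1_sig S2 y).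

Definition smle (P : preord) (p q : pcar P) : Prop :=
  forall r, ple P r p -> exists t, ple P t r /\ ple P t q.

Definition smPO (P : preord) : preord := PreOrd (pcar P) (smle P).

Definition sqPO (P : preord) : preord :=
  PreOrd {C : pcar P -> Prop | exists p, forall q, C q <-> (smle P p q /\ smle P q p)}
         (fun C1 C2 => exists p q, proj1_sig C1 p /\ proj1_sig C2 q /\ smle P p q).

Definition prodPO (I : Type) (F : I -> preord) : preord :=
  PreOrd (forall i : I, pcar (F i)) (fun x y => forall i, ple (F i) (x i) (y i)).

Definition po_iso (P Q : preord) : Prop :=
  exists f : pcar P -> pcar Q,
    (forall x y, f x = f y -> x = y) /\ (forall z, exists x, f x = z) /\
    (forall x y, ple P x y <-> ple Q (f x) (f y)).

(* index set {(i,j) | i < n, j < s_i} for the power prod_i P_i^(s_i) *)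
Definition cnf_index (n : nat) (s : nat -> nat) : Type :=
  {p : nat * nat | fst p < n /\ snd p < s (fst p)}.

(* Write [alpha] as the ordinal sum of the blocks [omega^delta_i], each repeated [s_i]
   times, followed by the finite ordinal [m].  Every strictly increasing self-map of [alpha]
   maps each block into itself.  It cannot move a point to an earlier block, since such a map
   of a well order is inflationary.  Nor can it move a point [x] of a block into the later
   part [R] of [alpha]: [omega^delta] contains a copy of itself above each of its points (add
   a monomial coefficientwise), so the points above [x] would embed [X + R] into [R] for some
   [X] containing a copy of the next smaller block, and an induction along the normal form
   shows that [R] absorbs no such [X] from the left.  Hence a copy of [alpha] is exactly a
   tuple of copies of its blocks (the finite part has a single copy), which is the first
   isomorphism; the separative modification and the separative quotient commute with
   isomorphisms and with products of preorders, which gives the other two. *)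

From Stdlib Require Import List Arith Lia Wellfounded.
From Stdlib Require Import ClassicalEpsilon ProofIrrelevance FunctionalExtensionality PropExtensionality Classical.

Lemma sig_eq {A : Type} {P : A -> Prop} (a b : {x : A | P x}) :
  proj1_sig a = proj1_sig b -> a = b.
Proof. apply eq_sig_hprop; intros; apply proof_irrelevance. Qed.

Definition strict_mono {A B : woset} (g : wcar A -> wcar B) : Prop :=
  forall x y, wlt A x y -> wlt B (g x) (g y).

Definition embeds (A B : woset) : Prop := exists g : wcar A -> wcar B, strict_mono g.

Definition embeds_above (E B : woset) : Prop :=
  forall b, exists g : wcar E -> wcar B, strict_mono g /\ forall e, wlt B b (g e).

Definition inflationary (W : woset) : Prop :=
  forall g : wcar W -> wcar W, strict_mono g -> forall z, ~ wlt W (g z) z.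

Lemma wf_inflationary W : well_founded (wlt W) -> inflationary W.
Proof.
  intros Hwf g Hg z. induction (Hwf z) as [z _ IH]. intro H.
  apply (IH (g z) H). apply Hg. exact H.
Qed.

Lemma embeds_refl A : embeds A A.
Proof. exists (fun x => x). intros x y h; exact h. Qed.

Lemma embeds_trans A B C : embeds A B -> embeds B C -> embeds A C.
Proof. intros [f hf] [g hg]. exists (fun x => g (f x)). intros x y h; auto. Qed.

Lemma embeds_above_embeds E B : embeds_above E B -> wcar B -> embeds E B.
Proof. intros H b. destruct (H b) as [g [hg _]]. exists g; exact hg. Qed.

Lemma embeds_above_comp E E' B : embeds E E' -> embeds_above E' B -> embeds_above E B.
Proof.
  intros [f hf] H b. destruct (H b) as [g [hg ha]]. exists (fun e => g (f e)). split; auto.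
  intros x y h; auto.
Qed.

Lemma wfin1_embeds B : wcar B -> embeds (wfin 1) B.
Proof. intros b. exists (fun _ => b). intros [x hx] [y hy] h; simpl in h; lia. Qed.

Lemma wf_wsum A B : well_founded (wlt A) -> well_founded (wlt B) ->
  well_founded (wlt (wsum A B)).
Proof.
  intros HA HB.
  assert (HL : forall a, Acc (wlt (wsum A B)) (inl a)).
  { intro a. induction (HA a) as [a _ IH]. constructor.
    intros [a'|b'] H; simpl in H; [apply IH; exact H | destruct H]. }
  intros [a|b]; [apply HL|].
  induction (HB b) as [b _ IH]. constructor.
  intros [a'|b'] H; simpl in H; [apply HL | apply IH; exact H].
Qed.

Lemma wf_wmuln A s : well_founded (wlt A) -> well_founded (wlt (wmuln A s)).
Proof.
  intros HA.
  assert (H : forall n (j : {j | j < s}), proj1_sig j = n -> forall a,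
            Acc (wlt (wmuln A s)) (j, a)).
  { intro n. induction n as [n IHn] using (well_founded_induction lt_wf).
    intros j Hj a. induction (HA a) as [a _ IHa]. constructor.
    intros [j' a'] [Hlt|[Heq Hlt]].
    - apply (IHn (proj1_sig j')); [simpl in Hlt; lia|reflexivity].
    - assert (j' = j) by (apply sig_eq; exact Heq). subst j'.
      apply IHa; exact Hlt. }
  intros [j a]. apply (H (proj1_sig j) j eq_refl).
Qed.

Lemma wf_wfin m : well_founded (wlt (wfin m)).
Proof. apply (wf_inverse_image _ _ lt (@proj1_sig nat _)), lt_wf. Qed.

Lemma wf_wseg D d : well_founded (wlt D) -> well_founded (wlt (wseg D d)).
Proof. apply (wf_inverse_image _ _ (wlt D) (@proj1_sig _ _)). Qed.

Lemma strict_total_wseg D d : strict_total (wlt D) -> strict_total (wlt (wseg D d)).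
Proof.
  intros [Hi [Ht Htot]]. split; [|split]; simpl.
  - intros x; apply Hi.
  - intros x y z; apply Ht.
  - intros x y. destruct (Htot (proj1_sig x) (proj1_sig y)) as [h|[h|h]]; auto.
    right; left; apply sig_eq; exact h.
Qed.

Section OmegaPow.
Variable W : woset.
Hypothesis Hst : strict_total (wlt W).

Lemma finite_has_max (P : wcar W -> Prop) l : (forall y, P y -> In y l) -> (exists y, P y) ->
  exists m, P m /\ forall y, P y -> y = m \/ wlt W y m.
Proof.
  destruct Hst as [Hi [Ht Htot]].
  revert P. induction l as [|a l IH]; intros P Hl [y Hy]; [destruct (Hl y Hy)|].
  destruct (classic (exists y, P y /\ y <> a)) as [[y' Hy']|Hno].
  - destruct (IH (fun y => P y /\ y <> a)) as [m' [[Pm' Nm'] Hm']].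
    { intros z [Pz Nz]. destruct (Hl z Pz) as [->|]; [congruence|auto]. }
    { exists y'; exact Hy'. }
    assert (Hm'' : forall z, P z -> z <> a -> z = m' \/ wlt W z m') by auto.
    destruct (classic (P a /\ wlt W m' a)) as [[Pa Ha]|Hna].
    + exists a. split; [exact Pa|]. intros z Pz.
      destruct (classic (z = a)) as [->|Nz]; [left; reflexivity|right].
      destruct (Hm'' z Pz Nz) as [->|h]; [exact Ha|exact (Ht _ _ _ h Ha)].
    + exists m'. split; [exact Pm'|]. intros z Pz.
      destruct (classic (z = a)) as [->|Nz]; [|exact (Hm'' z Pz Nz)].
      destruct (Htot a m') as [h|[h|h]]; [right; exact h|left; exact h|tauto].
  - assert (Honly : forall z, P z -> z = a)
      by (intros z Pz; apply NNPP; intro N; apply Hno; eauto).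
    exists y. split; [exact Hy|]. intros z Pz. left. rewrite (Honly z Pz), (Honly y Hy). reflexivity.
Qed.

Notation O := (womega_pow W).
Notation coef u := (proj1_sig u).

Definition supp_le (u : wcar O) (m : wcar W) : Prop :=
  forall y, coef u y <> 0 -> y = m \/ wlt W y m.

Lemma omega_supp_cases (u : wcar O) :
  (forall y, coef u y = 0) \/ exists m, coef u m <> 0 /\ supp_le u m.
Proof.
  destruct (classic (exists y, coef u y <> 0)) as [Hex|Hno].
  - right. destruct (proj2_sig u) as [l Hl]. apply (finite_has_max _ l Hl Hex).
  - left. intro y. apply NNPP. intro N. apply Hno. eauto.
Qed.

Lemma omega_null_acc (u : wcar O) : (forall y, coef u y = 0) -> Acc (wlt O) u.
Proof. intro Hz. constructor. intros g [x [Hx _]]. rewrite Hz in Hx. lia. Qed.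

Lemma omega_add_supp (u v : wcar O) : exists l : list (wcar W),
  forall x, coef u x + coef v x <> 0 -> In x l.
Proof.
  destruct (proj2_sig u) as [l1 H1], (proj2_sig v) as [l2 H2].
  exists (l1 ++ l2). intros x Hx. apply in_or_app.
  destruct (Nat.eq_dec (coef u x) 0); [right; apply H2; lia | left; apply H1; lia].
Qed.

Definition omega_add (u v : wcar O) : wcar O :=
  exist _ (fun y => coef u y + coef v y) (omega_add_supp u v).

Lemma omega_add_monol u1 u2 v : wlt O u1 u2 -> wlt O (omega_add u1 v) (omega_add u2 v).
Proof.
  intros [x [Hx Ha]]. exists x. simpl. split; [lia|].
  intros y Hy. rewrite (Ha y Hy). reflexivity.
Qed.

Lemma omega_lt_addl w v : (exists y, coef w y <> 0) -> wlt O v (omega_add w v).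
Proof.
  destruct Hst as [Hi [Ht _]].
  intros [y0 Hy0]. destruct (omega_supp_cases w) as [Hz|[m [Hm Hmax]]]; [rewrite Hz in Hy0; lia|].
  exists m. simpl. split; [lia|].
  intros y Hy. destruct (Nat.eq_dec (coef w y) 0) as [e|n]; [lia|].
  destruct (Hmax y n) as [->|h]; [destruct (Hi _ Hy)|destruct (Hi y (Ht _ _ _ h Hy))].
Qed.

Lemma omega_unit_supp (c : wcar W) : exists l : list (wcar W),
  forall x, (if excluded_middle_informative (x = c) then 1 else 0) <> 0 -> In x l.
Proof.
  exists (c :: nil). intros x.
  destruct (excluded_middle_informative (x = c)) as [->|_]; [left; reflexivity|lia].
Qed.

Definition omega_unit (c : wcar W) : wcar O :=
  exist _ (fun y => if excluded_middle_informative (y = c) then 1 else 0) (omega_unit_supp c).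

Lemma omega_embeds_above (c : wcar W) : embeds_above O O.
Proof.
  intro b. exists (fun e => omega_add (omega_add e (omega_unit c)) b). split.
  - intros x y h. apply omega_add_monol, omega_add_monol, h.
  - intro e. apply omega_lt_addl. exists c. simpl.
    destruct (excluded_middle_informative (c = c)); [lia|congruence].
Qed.

Lemma omega_zero_supp : exists l : list (wcar W), forall x : wcar W, 0 <> 0 -> In x l.
Proof. exists nil. lia. Qed.

Definition omega_zero : wcar O := exist _ (fun _ => 0) omega_zero_supp.

Lemma omega_drop_supp (m : wcar W) (u : wcar O) : exists l : list (wcar W),
  forall x, (if excluded_middle_informative (x = m) then 0 else coef u x) <> 0 -> In x l.
Proof.
  destruct (proj2_sig u) as [l Hl]. exists l. intros x.
  destruct (excluded_middle_informative (x = m)); [lia|apply Hl].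
Qed.

Definition omega_drop (m : wcar W) (u : wcar O) : wcar O :=
  exist _ (fun x => if excluded_middle_informative (x = m) then 0 else coef u x)
        (omega_drop_supp m u).

Lemma omega_drop_supp_lt m u : supp_le u m -> forall y, coef (omega_drop m u) y <> 0 -> wlt W y m.
Proof.
  intros Hu y. simpl. destruct (excluded_middle_informative (y = m)) as [_|n]; [lia|].
  intro Hy. destruct (Hu y Hy) as [e|h]; [contradiction|exact h].
Qed.

Lemma omega_lt_supp_le u g m : supp_le u m -> wlt O g u -> supp_le g m.
Proof.
  destruct Hst as [Hi [Ht Htot]].
  intros Hu [x [Hx Habove]] y Hy. destruct (Htot y m) as [h|[h|h]]; auto. exfalso.
  assert (Hux : coef u x <> 0) by lia.
  destruct (Htot x y) as [h2|[<-|h2]].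
  - rewrite (Habove y h2) in Hy.
    destruct (Hu y Hy) as [->|h3]; [exact (Hi _ h)|exact (Hi _ (Ht _ _ _ h h3))].
  - destruct (Hu x Hux) as [->|h3]; [exact (Hi _ h)|exact (Hi _ (Ht _ _ _ h h3))].
  - destruct (Hu x Hux) as [->|h3]; [exact (Hi _ (Ht _ _ _ h h2))|].
    exact (Hi _ (Ht _ _ _ h (Ht _ _ _ h2 h3))).
Qed.

Lemma omega_lt_top u g m : supp_le u m -> wlt O g u ->
  coef g m < coef u m \/ (coef g m = coef u m /\ wlt O (omega_drop m g) (omega_drop m u)).
Proof.
  destruct Hst as [Hi [Ht Htot]].
  intros Hu [x [Hx Habove]]. destruct (Htot x m) as [h|[->|h]]; [right|left; exact Hx|].
  - split; [exact (Habove m h)|]. exists x. simpl.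
    destruct (excluded_middle_informative (x = m)) as [->|_]; [destruct (Hi _ h)|].
    split; [exact Hx|]. intros y Hy.
    destruct (excluded_middle_informative (y = m)); [reflexivity|exact (Habove y Hy)].
  - exfalso. destruct (Hu x ltac:(lia)) as [->|h3]; [exact (Hi _ h)|exact (Hi _ (Ht _ _ _ h h3))].
Qed.

(* Lexicographic induction: on the coefficient at [m], then on the part of [u] below [m]. *)
Lemma omega_acc_supp_le m :
  (forall u, (forall y, coef u y <> 0 -> wlt W y m) -> Acc (wlt O) u) ->
  forall u, supp_le u m -> Acc (wlt O) u.
Proof.
  intros Hlow.
  enough (H : forall k u, supp_le u m -> coef u m = k -> Acc (wlt O) u) by eauto.
  intro k. induction k as [k IHk] using (well_founded_induction lt_wf).
  assert (Hdrop : forall h, Acc (wlt O) h ->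
            forall u, supp_le u m -> coef u m = k -> omega_drop m u = h -> Acc (wlt O) u).
  { intros h Hh. induction Hh as [h _ IHh]. intros u Hu Huk Hdu.
    constructor. intros g Hg. pose proof (omega_lt_supp_le u g m Hu Hg) as Hgm.
    destruct (omega_lt_top u g m Hu Hg) as [Hlt|[Heq Hlt]].
    - exact (IHk (coef g m) ltac:(lia) g Hgm eq_refl).
    - subst h. exact (IHh _ Hlt g Hgm ltac:(lia) eq_refl). }
  intros u Hu Huk. apply (Hdrop (omega_drop m u)); auto.
  apply Hlow, omega_drop_supp_lt, Hu.
Qed.

Lemma wf_omega_pow : well_founded (wlt W) -> well_founded (wlt O).
Proof.
  intro Hwf.
  assert (HP : forall m u, supp_le u m -> Acc (wlt O) u).
  { intro m. induction m as [m IH] using (well_founded_induction Hwf).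
    apply omega_acc_supp_le. intros u Hu.
    destruct (omega_supp_cases u) as [Hz|[m' [Hm' Hmax]]];
      [exact (omega_null_acc u Hz)|exact (IH m' (Hu m' Hm') u Hmax)]. }
  intro u. destruct (omega_supp_cases u) as [Hz|[m [_ Hmax]]];
    [exact (omega_null_acc u Hz)|exact (HP m u Hmax)].
Qed.

End OmegaPow.

Section SegmentExtension.
Variable D : woset.
Hypothesis Htr : forall x y z, wlt D x y -> wlt D y z -> wlt D x z.
Variables a b : wcar D.
Hypothesis Hab : wlt D a b.

Definition wseg_incl (x : wcar (wseg D a)) : wcar (wseg D b) :=
  exist _ (proj1_sig x) (Htr _ _ _ (proj2_sig x) Hab).

Definition omega_ext_coef (u : wcar (womega_pow (wseg D a))) (y : wcar (wseg D b)) : nat :=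
  match excluded_middle_informative (wlt D (proj1_sig y) a) with
  | left h => proj1_sig u (exist _ (proj1_sig y) h)
  | right _ => 0
  end.

Lemma omega_ext_supp u :
  exists l : list (wcar (wseg D b)), forall x, omega_ext_coef u x <> 0 -> In x l.
Proof.
  destruct (proj2_sig u) as [l Hl]. exists (map wseg_incl l). intros x. unfold omega_ext_coef.
  destruct (excluded_middle_informative (wlt D (proj1_sig x) a)) as [h|h]; [|lia].
  intro Hx. apply Hl, (in_map wseg_incl) in Hx.
  replace x with (wseg_incl (exist _ (proj1_sig x) h)); [exact Hx|]. apply sig_eq; reflexivity.
Qed.

Definition omega_ext (u : wcar (womega_pow (wseg D a))) : wcar (womega_pow (wseg D b)) :=
  exist _ (omega_ext_coef u) (omega_ext_supp u).

Lemma omega_ext_strict_mono : strict_mono omega_ext.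
Proof.
  intros u v [x [Hx Ha]]. exists (wseg_incl x). simpl. unfold omega_ext_coef. simpl. split.
  - destruct (excluded_middle_informative (wlt D (proj1_sig x) a)) as [h|h];
      [|destruct (h (proj2_sig x))].
    replace (exist (fun x0 => wlt D x0 a) (proj1_sig x) h) with x; [exact Hx|].
    apply sig_eq; reflexivity.
  - intros y Hy.
    destruct (excluded_middle_informative (wlt D (proj1_sig y) a)); [apply Ha, Hy|reflexivity].
Qed.
End SegmentExtension.

Lemma omega_wseg_embeds D a b : strict_total (wlt D) -> wlt D a b ->
  embeds (womega_pow (wseg D a)) (womega_pow (wseg D b)).
Proof. intros [_ [Ht _]] h. exists (omega_ext D Ht a b h). apply omega_ext_strict_mono. Qed.

Definition wsum_map {A A' B B' : woset} (f : wcar A -> wcar A') (g : wcar B -> wcar B')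
  (w : wcar (wsum A B)) : wcar (wsum A' B') :=
  match w with inl a => inl (f a) | inr b => inr (g b) end.

Lemma wsum_map_strict_mono {A A' B B' : woset} (f : wcar A -> wcar A') (g : wcar B -> wcar B') :
  strict_mono f -> strict_mono g -> strict_mono (A := wsum A B) (B := wsum A' B') (wsum_map f g).
Proof. intros hf hg [x|x] [y|y] h; simpl in *; auto. Qed.

Definition left_or {A B : woset} (a0 : wcar A) (w : wcar (wsum A B)) : wcar A :=
  match w with inl a => a | inr _ => a0 end.

Definition right_or {A B : woset} (b0 : wcar B) (w : wcar (wsum A B)) : wcar B :=
  match w with inl _ => b0 | inr b => b end.

Lemma wsum_below_inl {A B : woset} (a0 : wcar A) (w : wcar (wsum A B)) :
  wlt (wsum A B) w (inl a0) -> w = inl (left_or a0 w) /\ wlt A (left_or a0 w) a0.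
Proof. destruct w as [a|b]; simpl; [auto|intros []]. Qed.

Lemma wsum_above_inr {A B : woset} (b0 : wcar B) (w : wcar (wsum A B)) :
  wlt (wsum A B) (inr b0) w -> w = inr (right_or b0 w).
Proof. destruct w as [a|b]; simpl; [intros []|reflexivity]. Qed.

Definition left_unabsorbing (R E : woset) : Prop :=
  forall X, embeds E X -> ~ embeds (wsum X R) R.

Lemma left_unabsorbing_mono R E E' : left_unabsorbing R E -> embeds E E' -> left_unabsorbing R E'.
Proof. intros H He X Hx. apply H. eapply embeds_trans; eauto. Qed.

Lemma left_unabsorbing_equiv R R' E :
  left_unabsorbing R E -> embeds R R' -> embeds R' R -> left_unabsorbing R' E.
Proof.
  intros H [phi hphi] [psi hpsi] X HX [h hh]. apply (H X HX).
  exists (fun w => psi (h (wsum_map (fun x => x) phi w))).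
  intros x y hxy. apply hpsi, hh, wsum_map_strict_mono; auto. intros u v e; exact e.
Qed.

Lemma left_unabsorbing_wfin m : left_unabsorbing (wfin m) (wfin 1).
Proof.
  intros X [g _] [h hh].
  set (x0 := g (exist _ 0 Nat.lt_0_1)).
  assert (Hi : forall i (pf : i < m), i < proj1_sig (h (inr (exist _ i pf)))).
  { induction i as [|i IH]; intro pf.
    - assert (hl := hh (inl x0) (inr (exist _ 0 pf)) I). simpl in hl. lia.
    - assert (hl := hh (inr (exist _ i (Nat.lt_succ_l _ _ pf))) (inr (exist _ (S i) pf))).
      specialize (IH (Nat.lt_succ_l _ _ pf)). simpl in hl. specialize (hl ltac:(lia)). lia. }
  destruct m as [|m]; [destruct (h (inl x0)) as [k hk]; simpl in hk; lia|].
  specialize (Hi m (Nat.lt_succ_diag_r m)).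
  destruct (h (inr (exist _ m _))) as [k hk]. simpl in Hi. lia.
Qed.

(* If [k (inl a)] fell into [R], everything above [inl a], which contains [E + R], would land in [R]. *)
Lemma wsum_strict_mono_inl A R E T (k : wcar (wsum A R) -> wcar (wsum T R)) :
  left_unabsorbing R E -> embeds_above E A -> strict_mono k ->
  forall a, exists t, k (inl a) = inl t.
Proof.
  intros HR HA hk a. destruct (k (inl a)) as [t|r0] eqn:E0; [eauto|exfalso].
  destruct (HA a) as [gA [hgA hab]].
  assert (Hup : forall w, wlt (wsum A R) (inl a) w -> k w = inr (right_or r0 (k w))).
  { intros w hw. apply wsum_above_inr. rewrite <- E0. apply hk, hw. }
  apply (HR E (embeds_refl E)).
  exists (fun w => right_or r0 (k (wsum_map gA (fun r => r) w))).
  intros x y hxy.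
  assert (Hx : wlt (wsum A R) (inl a) (wsum_map gA (fun r => r) x)) by (destruct x; simpl; auto).
  assert (Hy : wlt (wsum A R) (inl a) (wsum_map gA (fun r => r) y)) by (destruct y; simpl; auto).
  assert (Hxy := hk _ _ (wsum_map_strict_mono gA (fun r => r) hgA (fun _ _ e => e) x y hxy)).
  rewrite (Hup _ Hx), (Hup _ Hy) in Hxy. exact Hxy.
Qed.

Lemma wsum_rigid A R E : inflationary (wsum A R) -> left_unabsorbing R E -> embeds_above E A ->
  forall f : wcar (wsum A R) -> wcar (wsum A R), strict_mono f ->
  (forall a, exists a', f (inl a) = inl a') /\ (forall r, exists r', f (inr r) = inr r').
Proof.
  intros Hinf HR HA f hf. split; [exact (wsum_strict_mono_inl A R E A f HR HA hf)|].
  intro r. destruct (f (inr r)) as [a'|r'] eqn:Ef; [|eauto].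
  exfalso. apply (Hinf f hf (inr r)). rewrite Ef. exact I.
Qed.

Lemma left_unabsorbing_wsum B R E (b0 : wcar B) :
  left_unabsorbing R E -> embeds_above E B -> inflationary B -> left_unabsorbing (wsum B R) B.
Proof.
  intros HR HA Hinf X [gX hgX] [h hh].
  destruct (wsum_strict_mono_inl B R E B (fun w => h (inr w)) HR HA
              (fun x y hxy => hh (inr x) (inr y) hxy) b0) as [z Hz].
  set (k := fun b => left_or z (h (inl (gX b)))).
  assert (Hk : forall b, h (inl (gX b)) = inl (k b) /\ wlt B (k b) z).
  { intro b. apply wsum_below_inl. rewrite <- Hz. apply hh; exact I. }
  apply (Hinf k) with z; [|apply Hk].
  intros x y hxy. assert (hl := hh (inl (gX x)) (inl (gX y)) (hgX x y hxy)).
  rewrite (proj1 (Hk x)), (proj1 (Hk y)) in hl. exact hl.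
Qed.

Definition wmuln_succ_split {B R : woset} {t : nat} (w : wcar (wsum (wmuln B (S t)) R))
  : wcar (wsum B (wsum (wmuln B t) R)) :=
  match w with
  | inl (exist _ 0 _, u) => inl u
  | inl (exist _ (S j) pf, u) => inr (inl (exist _ j (proj2 (Nat.succ_lt_mono _ _) pf), u))
  | inr r => inr (inr r)
  end.

Definition wmuln_succ_merge {B R : woset} {t : nat} (w : wcar (wsum B (wsum (wmuln B t) R)))
  : wcar (wsum (wmuln B (S t)) R) :=
  match w with
  | inl u => inl (exist _ 0 (Nat.lt_0_succ t), u)
  | inr (inl (j, u)) => inl (exist _ (S (proj1_sig j)) (proj1 (Nat.succ_lt_mono _ _) (proj2_sig j)), u)
  | inr (inr r) => inr r
  end.

Lemma wmuln_succ_split_strict_mono B R t : strict_mono (@wmuln_succ_split B R t).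
Proof.
  intros [[[[|j] hj] u]|x] [[[[|k] hk] v]|y] h; simpl in *; auto; try lia.
  - destruct h as [h|[h1 h2]]; [lia|exact h2].
  - destruct h as [h|[h1 h2]]; [lia|right; split; [lia|exact h2]].
Qed.

Lemma wmuln_succ_merge_strict_mono B R t : strict_mono (@wmuln_succ_merge B R t).
Proof.
  intros [u|[[[j hj] u]|x]] [v|[[[k hk] v]|y]] h; simpl in *; try tauto; try (left; lia).
  all: destruct h as [h|[h1 h2]]; [left; lia|right; split; [lia|exact h2]].
Qed.

Lemma wmuln0_wsum_embeds B R : embeds (wsum (wmuln B 0) R) R.
Proof.
  exists (fun w => match w with inl p => False_rect _ (Nat.nlt_0_r _ (proj2_sig (fst p)))
                           | inr r => r end).
  intros [[[j hj] u]|x] y h; [lia|].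
  destruct y as [[[j hj] u]|y]; [lia|exact h].
Qed.

Section Blocks.
Variable B : woset.
Variable b0 : wcar B.
Hypotheses (HBB : embeds_above B B) (Hinf : inflationary B).

Lemma left_unabsorbing_wmuln_wsum R E : left_unabsorbing R E -> embeds_above E B ->
  forall t, left_unabsorbing (wsum (wmuln B t) R) B.
Proof.
  intros HR HA t. induction t as [|t IH].
  - apply (left_unabsorbing_equiv R); [|exists inr; intros x y h; exact h|apply wmuln0_wsum_embeds].
    apply (left_unabsorbing_mono R E); [exact HR|exact (embeds_above_embeds E B HA b0)].
  - apply (left_unabsorbing_equiv (wsum B (wsum (wmuln B t) R))).
    + exact (left_unabsorbing_wsum B _ B b0 IH HBB Hinf).
    + exists wmuln_succ_merge. apply wmuln_succ_merge_strict_mono.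
    + exists wmuln_succ_split. apply wmuln_succ_split_strict_mono.
Qed.

Lemma left_unabsorbing_wmuln r : left_unabsorbing (wmuln B r) B.
Proof.
  apply (left_unabsorbing_equiv (wsum (wmuln B r) (wfin 0))).
  - apply (left_unabsorbing_wmuln_wsum _ (wfin 1)); [apply left_unabsorbing_wfin|].
    apply (embeds_above_comp _ B); [apply wfin1_embeds, b0|exact HBB].
  - exists (fun w => match w with inl p => p
                           | inr q => False_rect _ (Nat.nlt_0_r _ (proj2_sig q)) end).
    intros [x|[q hq]] [y|[q' hq']] h; simpl in *; tauto || lia.
  - exists inl. intros x y h; exact h.
Qed.

Notation index p := (proj1_sig (fst p)).

Lemma wmuln_index_mono t (p q : wcar (wmuln B t)) : wlt (wmuln B t) p q -> index p <= index q.
Proof. intros [h|[h _]]; lia. Qed.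

Lemma wmuln_index_le t (f : wcar (wmuln B t) -> wcar (wmuln B t)) :
  inflationary (wmuln B t) -> strict_mono f -> forall p, index p <= index (f p).
Proof. intros Hinf_t hf p. apply Nat.nlt_ge. intro h. apply (Hinf_t f hf p). left; exact h. Qed.

Lemma wmuln_tail_index_lt t jn i : i < t - S jn -> i + S jn < t.
Proof. lia. Qed.

Definition wmuln_tail t jn (p : wcar (wmuln B (t - S jn))) : wcar (wmuln B t) :=
  (exist _ (index p + S jn) (wmuln_tail_index_lt t jn _ (proj2_sig (fst p))), snd p).

Lemma wmuln_tail_strict_mono t jn : strict_mono (wmuln_tail t jn).
Proof. intros p q [h|[h1 h2]]; [left; simpl; lia|right; split; [simpl; lia|exact h2]]. Qed.

Lemma wmuln_drop_head t jn (h : wcar (wsum B (wmuln B (t - S jn))) -> wcar (wmuln B t)) :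
  strict_mono h -> (forall w, jn < index (h w)) ->
  embeds (wsum B (wmuln B (t - S jn))) (wmuln B (t - S jn)).
Proof.
  intros hh Hjn.
  assert (pf : forall w, index (h w) - S jn < t - S jn).
  { intro w. pose proof (proj2_sig (fst (h w))). specialize (Hjn w). simpl in *. lia. }
  exists (fun w => (exist _ (index (h w) - S jn) (pf w), snd (h w))).
  intros x y hxy. pose proof (Hjn x). pose proof (Hjn y).
  destruct (hh x y hxy) as [h1|[h1 h2]]; [left; simpl; lia|right; split; [simpl; lia|exact h2]].
Qed.

(* A block index raised by [f] would let everything above [(j, u)] embed
   [B + (blocks after j)] into the blocks after [j]. *)
Lemma wmuln_rigid t : inflationary (wmuln B t) ->
  forall f : wcar (wmuln B t) -> wcar (wmuln B t), strict_mono f ->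
  forall j u, exists v, f (j, u) = (j, v).
Proof.
  intros Hinf_t f hf j u.
  enough (Hj : index (f (j, u)) <= proj1_sig j).
  { pose proof (wmuln_index_le t f Hinf_t hf (j, u)) as Hge. exists (snd (f (j, u))).
    destruct (f (j, u)) as [j' v]. f_equal. apply sig_eq. simpl in *. lia. }
  apply Nat.nlt_ge. intro Hlt. set (jn := proj1_sig j).
  destruct (HBB u) as [gA [hgA hab]].
  set (g := fun w => match w with inl e => (j, gA e) | inr p => wmuln_tail t jn p end).
  apply (left_unabsorbing_wmuln (t - S jn) B (embeds_refl B)).
  apply (wmuln_drop_head t jn (fun w => f (g w))).
  - intros x y hxy. apply hf. destruct x as [x|x], y as [y|y]; simpl in *; try tauto.
    + right. split; [reflexivity|apply hgA, hxy].
    + left. simpl. unfold jn. lia.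
    + apply wmuln_tail_strict_mono, hxy.
  - intros [e|p]; simpl.
    + apply (Nat.lt_le_trans _ _ _ Hlt), wmuln_index_mono, hf. right. split; [reflexivity|apply hab].
    + apply (Nat.lt_le_trans _ (index (wmuln_tail t jn p))); [simpl; lia|].
      apply (wmuln_index_le t f Hinf_t hf).
Qed.
End Blocks.

Definition prod2 (P Q : preord) : preord :=
  PreOrd (pcar P * pcar Q) (fun x y => ple P (fst x) (fst y) /\ ple Q (snd x) (snd y)).

Lemma copy_restrict {V W : woset} (iota : wcar V -> wcar W) (C : pcar (copiesPO W)) :
  strict_mono iota -> (forall x y, wlt W (iota x) (iota y) -> wlt V x y) ->
  (forall x y, iota x = iota y -> x = y) ->
  (forall f, strictly_increasing f -> exists g, (forall v, f (iota v) = iota (g v)) /\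
                                     (forall w v, f w = iota v -> exists v', w = iota v')) ->
  exists g : wcar V -> wcar V, strictly_increasing g /\
    forall y, proj1_sig C (iota y) <-> exists x, y = g x.
Proof.
  intros hi hr inj Hrig. destruct (proj2_sig C) as [f [hf hC]].
  destruct (Hrig f hf) as [g [Hg Hout]]. exists g. split.
  - intros x y h. apply hr. rewrite <- !Hg. apply hf, hi, h.
  - intro y. rewrite hC. split.
    + intros [x e]. destruct (Hout x y (eq_sym e)) as [v ->]. rewrite Hg in e.
      exists v. apply inj, e.
    + intros [x ->]. exists (iota x). symmetry. apply Hg.
Qed.

Section CopiesSum.
Variables A B : woset.
Hypothesis Hrig : forall f : wcar (wsum A B) -> wcar (wsum A B), strict_mono f ->
  (forall a, exists a', f (inl a) = inl a') /\ (forall b, exists b', f (inr b) = inr b').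

Lemma copy_restrict_inl (C : pcar (copiesPO (wsum A B))) : exists g : wcar A -> wcar A,
  strictly_increasing g /\ forall y, proj1_sig C (inl y) <-> exists x, y = g x.
Proof.
  apply (copy_restrict (W := wsum A B) inl); [intros x y h; exact h|intros x y h; exact h|congruence|].
  intros f hf. destruct (Hrig f hf) as [HL HR].
  exists (fun a => left_or a (f (inl a))). split.
  - intro a. destruct (HL a) as [a' E]. rewrite E. reflexivity.
  - intros [a|b] v E; [eauto|]. destruct (HR b) as [b' E']. congruence.
Qed.

Lemma copy_restrict_inr (C : pcar (copiesPO (wsum A B))) : exists g : wcar B -> wcar B,
  strictly_increasing g /\ forall y, proj1_sig C (inr y) <-> exists x, y = g x.
Proof.
  apply (copy_restrict (W := wsum A B) inr); [intros x y h; exact h|intros x y h; exact h|congruence|].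
  intros f hf. destruct (Hrig f hf) as [HL HR].
  exists (fun b => right_or b (f (inr b))). split.
  - intro b. destruct (HR b) as [b' E]. rewrite E. reflexivity.
  - intros [a|b] v E; [|eauto]. destruct (HL a) as [a' E']. congruence.
Qed.

Lemma copies_wsum : po_iso (copiesPO (wsum A B)) (prod2 (copiesPO A) (copiesPO B)).
Proof.
  exists (fun C => (exist _ (fun a => proj1_sig C (inl a)) (copy_restrict_inl C),
                    exist _ (fun b => proj1_sig C (inr b)) (copy_restrict_inr C))
                   : pcar (prod2 (copiesPO A) (copiesPO B))).
  split; [|split].
  - intros C C' e. apply sig_eq, functional_extensionality. intros [a|b].
    + exact (equal_f (f_equal (fun p => proj1_sig (fst p)) e) a).
    + exact (equal_f (f_equal (fun p => proj1_sig (snd p)) e) b).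
  - intros [CA CB].
    destruct (proj2_sig CA) as [gA [hgA HA]], (proj2_sig CB) as [gB [hgB HB]].
    set (S := fun w : wcar (wsum A B) =>
                match w with inl a => proj1_sig CA a | inr b => proj1_sig CB b end).
    assert (HS : exists f, strictly_increasing f /\ forall y, S y <-> exists x, y = f x).
    { exists (wsum_map gA gB). split; [apply wsum_map_strict_mono; assumption|].
      intros [a|b]; simpl; [rewrite HA|rewrite HB]; split.
      - intros [x ->]. exists (inl x). reflexivity.
      - intros [[x|x] e]; simpl in e; [injection e; eauto|discriminate].
      - intros [x ->]. exists (inr x). reflexivity.
      - intros [[x|x] e]; simpl in e; [discriminate|injection e; eauto]. }
    exists (exist _ S HS : pcar (copiesPO (wsum A B))). f_equal; apply sig_eq; reflexivity.
  - intros C C'. simpl. split.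
    + intro h. split; intro; apply h.
    + intros [h1 h2] [a|b]; [apply h1|apply h2].
Qed.
End CopiesSum.

Section CopiesMuln.
Variables (A : woset) (s : nat).
Hypothesis Hrig : forall f : wcar (wmuln A s) -> wcar (wmuln A s), strict_mono f ->
  forall j u, exists v, f (j, u) = (j, v).

Lemma copy_restrict_block (C : pcar (copiesPO (wmuln A s))) j : exists g : wcar A -> wcar A,
  strictly_increasing g /\ forall y, proj1_sig C (j, y) <-> exists x, y = g x.
Proof.
  apply (copy_restrict (W := wmuln A s) (fun a => (j, a))).
  - intros x y h. right. split; [reflexivity|exact h].
  - intros x y [h|[_ h]]; [simpl in h; lia|exact h].
  - congruence.
  - intros f hf. exists (fun a => snd (f (j, a))). split.
    + intro a. destruct (Hrig f hf j a) as [v E]. rewrite E. reflexivity.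
    + intros [j' a] v E. destruct (Hrig f hf j' a) as [v' E']. rewrite E' in E.
      injection E; intros _ ->. eauto.
Qed.

Lemma copies_wmuln : po_iso (copiesPO (wmuln A s)) (prodPO {j | j < s} (fun _ => copiesPO A)).
Proof.
  exists (fun C => (fun j => exist _ (fun a => proj1_sig C (j, a)) (copy_restrict_block C j))
                   : pcar (prodPO {j | j < s} (fun _ => copiesPO A))).
  split; [|split].
  - intros C C' e. apply sig_eq, functional_extensionality. intros [j a].
    exact (equal_f (f_equal (fun p => proj1_sig (p j)) e) a).
  - intro x.
    set (g := fun j => proj1_sig (constructive_indefinite_description _ (proj2_sig (x j)))).
    assert (Hg : forall j, strictly_increasing (g j) /\
                   forall y, proj1_sig (x j) y <-> exists z, y = g j z).
    { intro j. unfold g. destruct (constructive_indefinite_description _ _); assumption. }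
    set (S := fun y : wcar (wmuln A s) => proj1_sig (x (fst y)) (snd y)).
    assert (HS : exists f, strictly_increasing f /\ forall y, S y <-> exists z, y = f z).
    { exists (fun p => (fst p, g (fst p) (snd p))). split.
      - intros [j u] [k v] [h|[h1 h2]]; [left; exact h|].
        assert (j = k) by (apply sig_eq; exact h1). subst k.
        right. split; [reflexivity|apply (proj1 (Hg j)), h2].
      - intros [j u]. unfold S. simpl. rewrite (proj2 (Hg j)). split.
        + intros [z ->]. exists (j, z). reflexivity.
        + intros [[k z] e]. injection e; intros; subst. eauto. }
    exists (exist _ S HS : pcar (copiesPO (wmuln A s))).
    apply functional_extensionality_dep. intro j. apply sig_eq. reflexivity.
  - intros C C'. simpl. split.
    + intros h j a. apply h.
    + intros h [j a]. apply h.
Qed.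
End CopiesMuln.

(* [f j] must leave room below [m] for the images of the [m - 1 - j] points above [j]. *)
Lemma wfin_self_map_le m (f : wcar (wfin m) -> wcar (wfin m)) : strict_mono f ->
  forall i j, i = m - 1 - proj1_sig j -> proj1_sig (f j) + i <= m - 1.
Proof.
  intros hf i. induction i as [|i IH]; intros [j hj] Hi; simpl in *.
  - pose proof (proj2_sig (f (exist _ j hj))). simpl in *. lia.
  - assert (hj' : S j < m) by lia.
    specialize (IH (exist _ (S j) hj') ltac:(simpl; lia)).
    assert (hl := hf (exist _ j hj) (exist _ (S j) hj') ltac:(simpl; lia)). simpl in *. lia.
Qed.

Lemma wfin_self_map_id m (f : wcar (wfin m) -> wcar (wfin m)) : strict_mono f -> forall j, f j = j.
Proof.
  intros hf j. apply sig_eq.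
  pose proof (wfin_self_map_le m f hf _ j eq_refl) as Hle.
  assert (Hge : ~ proj1_sig (f j) < proj1_sig j) by exact (wf_inflationary _ (wf_wfin m) f hf j).
  pose proof (proj2_sig j). simpl in *. lia.
Qed.

Lemma copies_wfin_full m (C : pcar (copiesPO (wfin m))) : proj1_sig C = fun _ => True.
Proof.
  destruct (proj2_sig C) as [f [hf hC]]. apply functional_extensionality. intro y.
  apply propositional_extensionality. rewrite hC. split; [auto|]. intros _. exists y.
  rewrite (wfin_self_map_id m f hf y). reflexivity.
Qed.

Lemma copies_wfin_empty_prod m (I : Type) (F : I -> preord) : (I -> False) ->
  po_iso (copiesPO (wfin m)) (prodPO I F).
Proof.
  intro HI. exists (fun _ => (fun i => False_rect _ (HI i)) : pcar (prodPO I F)). split; [|split].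
  - intros x y _. apply sig_eq. rewrite !copies_wfin_full. reflexivity.
  - intro z. assert (Hc : exists f : wcar (wfin m) -> wcar (wfin m), strictly_increasing f /\
                 forall y, True <-> exists x, y = f x).
    { exists (fun x => x). split; [intros x y h; exact h|]. intro y; split; eauto. }
    exists (exist _ _ Hc : pcar (copiesPO (wfin m))).
    apply functional_extensionality_dep. intro i. destruct (HI i).
  - intros x y. simpl. split; [intros _ i; destruct (HI i)|].
    intros _ w _. pose proof (equal_f (copies_wfin_full m y) w) as E. simpl in E.
    rewrite E. exact Logic.I.
Qed.

Lemma po_iso_sym P Q : po_iso P Q -> po_iso Q P.
Proof.
  intros [f [Hinj [Hsurj Hord]]].
  set (g := fun z => proj1_sig (constructive_indefinite_description _ (Hsurj z))).
  assert (Hg : forall z, f (g z) = z).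
  { intro z. unfold g. destruct (constructive_indefinite_description _ _); assumption. }
  exists g. split; [|split].
  - intros x y e. rewrite <- (Hg x), <- (Hg y), e. reflexivity.
  - intro z. exists (f z). apply Hinj. rewrite Hg. reflexivity.
  - intros x y. rewrite Hord, !Hg. tauto.
Qed.

Lemma po_iso_trans P Q R : po_iso P Q -> po_iso Q R -> po_iso P R.
Proof.
  intros [f [fi [fs fo]]] [g [gi [gs go]]]. exists (fun x => g (f x)). split; [|split].
  - intros x y e. auto.
  - intro z. destruct (gs z) as [y <-]. destruct (fs y) as [x <-]. eauto.
  - intros x y. rewrite fo, go. tauto.
Qed.

Lemma po_iso_prod2 P P' Q Q' : po_iso P P' -> po_iso Q Q' -> po_iso (prod2 P Q) (prod2 P' Q').
Proof.
  intros [f [fi [fs fo]]] [g [gi [gs go]]].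
  exists (fun x => (f (fst x), g (snd x))). split; [|split].
  - intros [x1 x2] [y1 y2] e. simpl in e. injection e; intros. f_equal; auto.
  - intros [z1 z2]. destruct (fs z1) as [x1 <-], (gs z2) as [x2 <-]. exists (x1, x2). reflexivity.
  - intros [x1 x2] [y1 y2]. simpl. rewrite fo, go. tauto.
Qed.

Lemma prodPO_sum (I J : Type) (F : I + J -> preord) :
  po_iso (prodPO (I + J) F)
         (prod2 (prodPO I (fun i => F (inl i))) (prodPO J (fun j => F (inr j)))).
Proof.
  exists (fun x => (fun i => x (inl i), fun j => x (inr j))
                   : pcar (prod2 (prodPO I (fun i => F (inl i))) (prodPO J (fun j => F (inr j))))).
  split; [|split].
  - intros x y e. apply functional_extensionality_dep. intros [i|j].
    + exact (equal_f_dep (f_equal fst e) i).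
    + exact (equal_f_dep (f_equal snd e) j).
  - intros [y z]. exists (fun w => match w as w return pcar (F w) with
                                   | inl i => y i | inr j => z j end). reflexivity.
  - intros x y. simpl. split; [intro h; split; intro; apply h|].
    intros [h1 h2] [i|j]; [apply h1|apply h2].
Qed.

Lemma prodPO_reindex (I J : Type) (F : I -> preord) (e : J -> I) :
  (forall j j', e j = e j' -> j = j') -> (forall i, exists j, e j = i) ->
  po_iso (prodPO I F) (prodPO J (fun j => F (e j))).
Proof.
  intros inj surj.
  set (e' := fun i => proj1_sig (constructive_indefinite_description _ (surj i))).
  assert (ee' : forall i, e (e' i) = i).
  { intro i. unfold e'. destruct (constructive_indefinite_description _ _); assumption. }
  assert (transport : forall (P : forall i, pcar (F i) -> Prop) (x : pcar (prodPO I F)),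
            (forall j, P (e j) (x (e j))) -> forall i, P i (x i)).
  { intros P x H i. rewrite <- (ee' i). apply H. }
  exists (fun x => (fun j => x (e j)) : pcar (prodPO J (fun j => F (e j)))). split; [|split].
  - intros x y E. apply functional_extensionality_dep.
    apply (transport (fun i a => a = y i)). intro j. exact (equal_f_dep E j).
  - intro z. exists (fun i => eq_rect _ (fun i => pcar (F i)) (z (e' i)) i (ee' i)).
    apply functional_extensionality_dep. intro j. simpl.
    generalize (ee' (e j)). rewrite (inj _ _ (ee' (e j))). intro p.
    rewrite (proof_irrelevance _ p eq_refl). reflexivity.
  - intros x y. simpl. split; [intros h j; apply h|].
    intro h. apply (transport (fun i a => ple (F i) a (y i))), h.
Qed.

Definition cnf_index_split (s : nat -> nat) (k : nat) (w : {j | j < s k} + cnf_index k s)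
  : cnf_index (S k) s :=
  match w with
  | inl j => exist _ (k, proj1_sig j) (conj (Nat.lt_succ_diag_r k) (proj2_sig j))
  | inr p => exist _ (proj1_sig p)
               (conj (Nat.lt_lt_succ_r _ _ (proj1 (proj2_sig p))) (proj2 (proj2_sig p)))
  end.

Lemma cnf_index_split_inj s k w w' : cnf_index_split s k w = cnf_index_split s k w' -> w = w'.
Proof.
  intro E. apply (f_equal (@proj1_sig _ _)) in E.
  destruct w as [[j hj]|[[i j] [hi hj]]], w' as [[j' hj']|[[i' j'] [hi' hj']]];
    simpl in *; injection E; intros; subst; try lia; f_equal; apply sig_eq; reflexivity.
Qed.

Lemma cnf_index_split_surj s k p : exists w, cnf_index_split s k w = p.
Proof.
  destruct p as [[i j] [hi hj]]. simpl in *. destruct (Nat.eq_dec i k) as [->|ne].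
  - exists (inl (exist _ j hj)). apply sig_eq. reflexivity.
  - assert (hi' : i < k) by lia. exists (inr (exist _ (i, j) (conj hi' hj))). apply sig_eq. reflexivity.
Qed.

Lemma prodPO_cnf_index_succ (H : nat -> preord) s k :
  po_iso (prodPO (cnf_index (S k) s) (fun p => H (fst (proj1_sig p))))
         (prod2 (prodPO {j | j < s k} (fun _ => H k))
                (prodPO (cnf_index k s) (fun p => H (fst (proj1_sig p))))).
Proof.
  eapply po_iso_trans.
  - apply (prodPO_reindex _ _ _ (cnf_index_split s k));
      [apply cnf_index_split_inj|apply cnf_index_split_surj].
  - apply prodPO_sum.
Qed.

Section CantorNormalForm.
Variables (D : woset) (d : nat -> wcar D) (s : nat -> nat) (n m : nat).
Hypothesis HD : well_order (wlt D).
Hypothesis Hd : forall i j, i < j < n -> wlt D (d i) (d j).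
Hypothesis Hd0 : exists x, wlt D x (d 0).

Definition block i := womega_pow (wseg D (d i)).

(* what [cnf D d s k m] cannot absorb: the next smaller block, or a point when [k = 0] *)
Definition cnf_lower k := match k with 0 => wfin 1 | S k' => block k' end.

Lemma wf_block i : well_founded (wlt (block i)).
Proof.
  destruct HD as [Hst Hwf].
  apply wf_omega_pow; [apply strict_total_wseg, Hst|apply wf_wseg, Hwf].
Qed.

Lemma wseg_inhabited i : i < n -> inhabited (wcar (wseg D (d i))).
Proof.
  intro hi. destruct Hd0 as [x hx]. destruct HD as [[_ [Ht _]] _]. constructor.
  destruct i as [|i]; [exact (exist _ x hx)|].
  exact (exist _ x (Ht _ _ _ hx (Hd 0 (S i) ltac:(lia)))).
Qed.

Lemma block_embeds_above i : i < n -> embeds_above (block i) (block i).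
Proof.
  intro hi. destruct (wseg_inhabited i hi) as [c].
  apply (omega_embeds_above _ (strict_total_wseg _ _ (proj1 HD)) c).
Qed.

Lemma cnf_lower_embeds k : k < n -> embeds (cnf_lower k) (block k).
Proof.
  intro hk. destruct k as [|k]; simpl.
  - apply wfin1_embeds, omega_zero.
  - apply omega_wseg_embeds; [apply HD|apply Hd; lia].
Qed.

Lemma cnf_lower_embeds_above k : k < n -> embeds_above (cnf_lower k) (block k).
Proof. intro hk. exact (embeds_above_comp _ _ _ (cnf_lower_embeds k hk) (block_embeds_above k hk)). Qed.

Lemma wf_cnf k : well_founded (wlt (cnf D d s k m)).
Proof.
  induction k as [|k IH]; [exact (wf_wfin m)|].
  apply wf_wsum; [apply wf_wmuln, wf_block|exact IH].
Qed.

Lemma left_unabsorbing_cnf k : k <= n -> left_unabsorbing (cnf D d s k m) (cnf_lower k).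
Proof.
  induction k as [|k IH]; intro hk; [apply left_unabsorbing_wfin|].
  apply (left_unabsorbing_wmuln_wsum (block k) (omega_zero _) (block_embeds_above k ltac:(lia))
           (wf_inflationary _ (wf_block k)) _ (cnf_lower k) (IH ltac:(lia))).
  apply cnf_lower_embeds_above; lia.
Qed.

Lemma cnf_rigid k : k < n ->
  forall f : wcar (cnf D d s (S k) m) -> wcar (cnf D d s (S k) m), strict_mono f ->
  (forall a, exists a', f (inl a) = inl a') /\ (forall r, exists r', f (inr r) = inr r').
Proof.
  intro hk. apply (wsum_rigid (wmuln (block k) (s k)) (cnf D d s k m) (cnf_lower k)).
  - exact (wf_inflationary _ (wf_cnf (S k))).
  - apply left_unabsorbing_cnf; lia.
  - intros [j u]. destruct (cnf_lower_embeds_above k hk u) as [g [hg ha]].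
    exists (fun e => (j, g e)). split.
    + intros x y h. right. split; [reflexivity|apply hg, h].
    + intro e. right. split; [reflexivity|apply ha].
Qed.

Lemma copies_cnf k : k <= n ->
  po_iso (copiesPO (cnf D d s k m)) (prodPO (cnf_index k s) (fun p => copiesPO (block (fst (proj1_sig p))))).
Proof.
  induction k as [|k IH]; intro hk.
  - apply copies_wfin_empty_prod. intros [[i j] [h _]]. simpl in h. lia.
  - eapply po_iso_trans; [apply copies_wsum, cnf_rigid; lia|].
    eapply po_iso_trans; [apply po_iso_prod2; [|apply IH; lia]|].
    + apply copies_wmuln, (wmuln_rigid _ (omega_zero _) (block_embeds_above k ltac:(lia))).
      * exact (wf_inflationary _ (wf_block k)).
      * exact (wf_inflationary _ (wf_wmuln _ _ (wf_block k))).
    + apply po_iso_sym, (prodPO_cnf_index_succ (fun i => copiesPO (block i))).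
Qed.
End CantorNormalForm.

Section Separative.
Variable P : preord.
Hypothesis Hrefl : forall x, ple P x x.
Hypothesis Htrans : forall x y z, ple P x y -> ple P y z -> ple P x z.

Lemma smle_refl x : smle P x x.
Proof. intros r hr. exists r. split; auto. Qed.

Lemma smle_trans x y z : smle P x y -> smle P y z -> smle P x z.
Proof.
  intros h1 h2 r hr. destruct (h1 r hr) as [t [t1 t2]].
  destruct (h2 t t2) as [u [u1 u2]]. exists u. split; [exact (Htrans _ _ _ u1 t1)|exact u2].
Qed.

Definition sq_class (p : pcar P) : pcar (sqPO P) :=
  exist _ (fun q => smle P p q /\ smle P q p) (ex_intro _ p (fun q => iff_refl _)).

Lemma sq_class_surj (C : pcar (sqPO P)) : exists p, C = sq_class p.
Proof.
  destruct (proj2_sig C) as [p Hp]. exists p. apply sig_eq, functional_extensionality.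
  intro q. apply propositional_extensionality, Hp.
Qed.

Lemma sq_class_eq p q : sq_class p = sq_class q <-> smle P p q /\ smle P q p.
Proof.
  split.
  - intro E. assert (Hq : proj1_sig (sq_class q) p) by (rewrite <- E; split; apply smle_refl).
    destruct Hq as [h1 h2]. split; assumption.
  - intros [h1 h2]. apply sig_eq, functional_extensionality. intro r.
    apply propositional_extensionality. simpl.
    split; intros [h3 h4]; split; eapply smle_trans; eassumption.
Qed.

Lemma sq_class_le p q : ple (sqPO P) (sq_class p) (sq_class q) <-> smle P p q.
Proof.
  split.
  - intros [p' [q' [[hp _] [[_ hq] h]]]]. eauto using smle_trans.
  - intro h. exists p, q. repeat split; auto using smle_refl.
Qed.

Lemma sqPO_antisym C C' : ple (sqPO P) C C' -> ple (sqPO P) C' C -> C = C'.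
Proof.
  destruct (sq_class_surj C) as [p ->], (sq_class_surj C') as [q ->].
  rewrite !sq_class_le. intros h1 h2. apply sq_class_eq. auto.
Qed.

Lemma sqPO_universal (Q : preord) (f : pcar P -> pcar Q) :
  (forall x y, ple Q x y -> ple Q y x -> x = y) -> (forall q, exists p, f p = q) ->
  (forall p p', smle P p p' <-> ple Q (f p) (f p')) ->
  po_iso (sqPO P) Q.
Proof.
  intros Hanti Hsurj Hf.
  set (rep := fun C => proj1_sig (constructive_indefinite_description _ (sq_class_surj C))).
  assert (Hrep : forall C, C = sq_class (rep C)).
  { intro C. unfold rep. destruct (constructive_indefinite_description _ _); assumption. }
  exists (fun C => f (rep C)). split; [|split].
  - intros C C' E. rewrite (Hrep C), (Hrep C'). apply sq_class_eq.
    rewrite !Hf, E. split; apply Hf, smle_refl.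
  - intro q. destruct (Hsurj q) as [p <-]. exists (sq_class p).
    destruct (proj1 (sq_class_eq _ _) (Hrep (sq_class p))) as [h1 h2].
    apply Hanti; apply Hf; assumption.
  - intros C C'. rewrite (Hrep C) at 1. rewrite (Hrep C') at 1. rewrite sq_class_le. apply Hf.
Qed.
End Separative.

Lemma smle_po_iso P Q (f : pcar P -> pcar Q) :
  (forall z, exists x, f x = z) -> (forall x y, ple P x y <-> ple Q (f x) (f y)) ->
  forall p q, smle P p q <-> smle Q (f p) (f q).
Proof.
  intros fs fo p q. split.
  - intros H r' hr. destruct (fs r') as [r <-]. apply fo in hr.
    destruct (H r hr) as [t [h1 h2]]. exists (f t). rewrite <- !fo. auto.
  - intros H r hr. apply fo in hr. destruct (H _ hr) as [t' [h1 h2]].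
    destruct (fs t') as [t <-]. exists t. rewrite !fo. auto.
Qed.

Section ProductSeparative.
Variables (I : Type) (F : I -> preord).
Hypothesis Hrefl : forall i x, ple (F i) x x.

Definition prod_update (p : forall i, pcar (F i)) (i : I) (r : pcar (F i)) : forall j, pcar (F j) :=
  fun j => match excluded_middle_informative (i = j) with
           | left e => eq_rect i (fun j => pcar (F j)) r j e
           | right _ => p j
           end.

Lemma prod_update_same p i r : prod_update p i r i = r.
Proof.
  unfold prod_update. destruct (excluded_middle_informative (i = i)) as [e|n]; [|congruence].
  rewrite (proof_irrelevance _ e eq_refl). reflexivity.
Qed.

Lemma prod_update_other p i r j : i <> j -> prod_update p i r j = p j.
Proof.
  intro n. unfold prod_update.
  destruct (excluded_middle_informative (i = j)); [contradiction|reflexivity].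
Qed.

Lemma smle_prodPO p q : smle (prodPO I F) p q <-> forall i, smle (F i) (p i) (q i).
Proof.
  split.
  - intros H i r hr. destruct (H (prod_update p i r)) as [t [h1 h2]].
    + intro j. destruct (classic (i = j)) as [<-|n].
      * rewrite prod_update_same. exact hr.
      * rewrite prod_update_other by exact n. apply Hrefl.
    + exists (t i). split; [|apply h2]. specialize (h1 i). rewrite prod_update_same in h1. exact h1.
  - intros H r hr.
    set (t := fun i => proj1_sig (constructive_indefinite_description _ (H i (r i) (hr i)))).
    exists t. split; intro i; unfold t;
      destruct (constructive_indefinite_description _ _) as [x hx]; simpl; tauto.
Qed.

Lemma smPO_po_iso_prodPO P : po_iso P (prodPO I F) -> po_iso (smPO P) (prodPO I (fun i => smPO (F i))).
Proof.
  intros [f [fi [fs fo]]]. exists f. split; [exact fi|split; [exact fs|]].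
  intros x y. simpl. rewrite (smle_po_iso _ _ f fs fo). apply smle_prodPO.
Qed.

Hypothesis Htrans : forall i x y z, ple (F i) x y -> ple (F i) y z -> ple (F i) x z.

Lemma sqPO_po_iso_prodPO P : (forall x, ple P x x) -> (forall x y z, ple P x y -> ple P y z -> ple P x z) ->
  po_iso P (prodPO I F) -> po_iso (sqPO P) (prodPO I (fun i => sqPO (F i))).
Proof.
  intros HreflP HtransP [f [fi [fs fo]]].
  apply (sqPO_universal P HreflP HtransP (prodPO I (fun i => sqPO (F i)))
           (fun p i => sq_class (F i) (f p i))).
  - intros x y h1 h2. apply functional_extensionality_dep. intro i.
    apply (sqPO_antisym _ (Hrefl i) (Htrans i)); auto.
  - intro z. set (r := fun i => proj1_sig (constructive_indefinite_description _
                                   (sq_class_surj (F i) (z i)))).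
    destruct (fs r) as [p Hp]. exists p. apply functional_extensionality_dep. intro i.
    rewrite Hp. unfold r. destruct (constructive_indefinite_description _ _). auto.
  - intros p p'. rewrite (smle_po_iso _ _ f fs fo), smle_prodPO. simpl.
    split; intros h i; apply (sq_class_le _ (Hrefl i) (Htrans i)), h.
Qed.
End ProductSeparative.

Theorem mainTheorem2 (D : woset) (d : nat -> wcar D) (s : nat -> nat) (n m : nat)
  (HD : well_order (wlt D))
  (Hn : 1 <= n)
  (Hs : forall i, i < n -> 1 <= s i)
  (Hd : forall i j, i < j < n -> wlt D (d i) (d j))
  (Hd0 : exists x, wlt D x (d 0)) :
  let alpha := cnf D d s n m in
  let F := fun k : cnf_index n s => copiesPO (womega_pow (wseg D (d (fst (proj1_sig k))))) in
  po_iso (copiesPO alpha) (prodPO (cnf_index n s) F) /\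
  po_iso (smPO (copiesPO alpha)) (prodPO (cnf_index n s) (fun k => smPO (F k))) /\
  po_iso (sqPO (copiesPO alpha)) (prodPO (cnf_index n s) (fun k => sqPO (F k))).
Proof.
  intros alpha F.
  assert (Hcopies : po_iso (copiesPO alpha) (prodPO (cnf_index n s) F))
    by exact (copies_cnf D d s n m HD Hd Hd0 n (le_n n)).
  assert (Hrefl : forall W x, ple (copiesPO W) x x) by (intros W x y h; exact h).
  assert (Htrans : forall W x y z, ple (copiesPO W) x y -> ple (copiesPO W) y z -> ple (copiesPO W) x z)
    by (intros W x y z h1 h2 w h; apply h2, h1, h).
  split; [exact Hcopies|split].
  - apply smPO_po_iso_prodPO; [intro; apply Hrefl|exact Hcopies].
  - apply sqPO_po_iso_prodPO; [intro; apply Hrefl|intro; apply Htrans|apply Hrefl|apply Htrans|exact Hcopies].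
Qed.
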